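(* Let $(E_n)_{n\ge1}$ be Banach spaces with norms $|\cdot|_n$; for each $n$ let $U_n(t)$ be a strongly continuous group of isometries on $E_n$, and let $L_{n,n+1}:E_{n+1}\to E_n$ be bounded linear operators with $\|L_{n,n+1}\|_{\mathcal{L}(E_{n+1},E_n)}\le Cn$ for all $n\ge1$, for some constant $C>0$. Let $t^*>0$ and let $u_n\in C^1([0,t^*],E_n)$, $n\ge1$, satisfy $$\dot u_n(t)=U_n(t)L_{n,n+1}U_{n+1}(-t)u_{n+1}(t),\qquad u_n(0)=0,\qquad n\ge1.$$ Assume there exists $R>0$ with $\sup_{0\le t\le t^*}|u_n(t)|_n\le R^n$ for all $n\ge1$. Then $u_n(t)=0$ for all $t\in[0,t^*]$ and all $n\ge1$. *)

From HB Require Import structures.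
From mathcomp Require Import all_boot all_order all_algebra.
From mathcomp Require Import all_classical all_reals all_analysis.
Set Implicit Arguments. Unset Strict Implicit. Unset Printing Implicit Defensive.
Import Order.TTheory GRing.Theory Num.Theory.
Import numFieldNormedType.Exports.
Local Open Scope classical_set_scope.
Local Open Scope ring_scope.

Definition is_deriv_on {R : realType} {V : normedModType R} (a b : R)
  (f f' : R -> V) : Prop :=
  forall t : R, a <= t <= b ->
    (fun h : R => h^-1 *: (f (t + h) - f t))
      @ within [set h : R | h != 0 /\ a <= t + h <= b] (nbhs (0 : R))
      --> f' t.

Definition is_C1_on {R : realType} {V : normedModType R} (a b : R)
  (f f' : R -> V) : Prop :=
  is_deriv_on a b f f' /\ {within `[a, b], continuous f'}.

Definition sc_isometry_group {R : realType} {V : normedModType R}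
  (U : R -> {linear V -> V}) : Prop :=
  [/\ forall x, U 0 x = x,
      forall s t x, U (s + t) x = U s (U t x),
      forall t x, `|U t x| = `|x| &
      forall x, continuous (fun t => U t x)].

From HB Require Import structures.
From mathcomp Require Import all_boot all_order all_algebra.
From mathcomp Require Import all_classical all_reals all_analysis.
From mathcomp Require Import lra ring.
Import Order.TTheory GRing.Theory Num.Theory.
Import numFieldNormedType.Exports.
Local Open Scope classical_set_scope.
Local Open Scope ring_scope.

Set Implicit Arguments.
Unset Strict Implicit.
Unset Printing Implicit Defensive.

(* Start from a time s0 at which every u_n vanishes and feed the a priori
   bound |u_(n+1)| <= r^(n+1) k times into the equation for u_n, using the
   mean value inequality and the fact that the U_n are isometries. Because
   ||L_(n,n+1)|| grows only linearly in n, the k-fold iteration produces the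
   binomial coefficient C(n-1+k, k) <= 2^(n-1+k) rather than a factorial, so
   |u_n(t)| <= r^n 2^(n-1) (2 C r (t - s0))^k for every k. Hence u_n vanishes
   on [s0, s0 + 1/(4 C r)], and finitely many such steps from s0 = 0 cover
   [0, t*]. *)

Lemma real_induction (R : realType) (a b : R) (P : R -> Prop) :
  (forall c, a <= c <= b -> (forall s, a <= s < c -> P s) -> P c) ->
  (forall c, a <= c < b -> (forall s, a <= s <= c -> P s) ->
     exists2 d, 0 < d & forall s, c < s <= b -> s < c + d -> P s) ->
  forall s, a <= s <= b -> P s.
Proof.
move=> closed_left open_right.
pose S := [set t | a <= t <= b /\ forall s, a <= s < t -> P s].
have [ab|ba] := leP a b; last by move=> s; lra.
have Sa : S a by split=> [|s]; lra.
have supS : has_sup S by split; [exists a | exists b => t [/andP[]]].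
set c := sup S.
have ac : a <= c by exact: sup_upper_bound.
have cb : c <= b by apply: ge_sup; [exists a | move=> t [/andP[]]].
have below_c s : a <= s < c -> P s.
  move=> /andP[sa sc].
  have [t [_ Pt] st] := sup_adherent (eps := c - s) ltac:(lra) supS.
  by apply: Pt; rewrite /c in st *; lra.
have Pc : P c by apply: closed_left; [lra | exact: below_c].
have upto_c s : a <= s <= c -> P s.
  move=> ?; have [?|?] := ltP s c; first by apply: below_c; lra.
  by have -> : s = c by lra.
have cb' : c = b.
  apply: le_anti; rewrite cb leNgt /=; apply/negP => cb2.
  have [d d0 Pd] := open_right c ltac:(lra) upto_c.
  pose c' := Num.min (c + d / 2) b.
  have : S c'.
    split=> [|s]; first by rewrite /c'; apply/andP; split; rewrite ?ge_min ?le_min; lra.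
    move=> sc'; have [?|?] := leP s c; first by apply: upto_c; lra.
    apply: Pd; move: sc'; rewrite /c' lt_min; lra.
  move=> /(sup_upper_bound supS); rewrite /c' -/c ge_min; lra.
by move=> s hs; apply: upto_c; rewrite cb'.
Qed.

Section MeanValueInequality.
Variables (R : realType) (V : normedModType R) (A B : R) (f f' : R -> V).
Hypothesis f_deriv : is_deriv_on A B f f'.

Lemma is_deriv_on_approx (t e : R) : A <= t <= B -> 0 < e ->
  exists2 d, 0 < d & forall h, A <= t + h <= B -> `|h| < d ->
    `|f (t + h) - f t - h *: f' t| <= e * `|h|.
Proof.
move=> tAB e_gt0.
have /cvgrPdist_le/(_ e e_gt0)/nbhs_ballP[d d_gt0 near0] := f_deriv tAB.
exists d => // h htAB hd; have [->|h0] := eqVneq h 0.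
  by rewrite addr0 subrr scale0r subr0 !normr0 mulr0.
have := near0 h; rewrite -ball_normE /ball_ /= sub0r normrN => /(_ hd (conj h0 htAB)).
have -> : f (t + h) - f t - h *: f' t = - (h *: (f' t - h^-1 *: (f (t + h) - f t))).
  by rewrite scalerBr scalerA divff // scale1r opprB.
by rewrite normrN normrZ mulrC => /ler_wpM2r->.
Qed.

Lemma is_deriv_on_lipschitz_at (t : R) : A <= t <= B ->
  exists2 d, 0 < d & forall h, A <= t + h <= B -> `|h| < d ->
    `|f (t + h) - f t| <= (1 + `|f' t|) * `|h|.
Proof.
move=> tAB; have [d d_gt0 approx] := is_deriv_on_approx tAB ltr01.
exists d => // h htAB hd.
rewrite -[f (t + h) - f t](subrK (h *: f' t)) mulrDl mul1r.
rewrite (le_trans (ler_normD _ _)) // lerD //.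
  by rewrite -[X in _ <= X]mul1r approx.
by rewrite normrZ mulrC.
Qed.

Variables (a b : R) (phi psi : R -> R).
Hypothesis deriv_le_psi : forall t, a <= t < b -> `|f' t| <= psi t.
(* [phi] plays the role of a primitive of [psi]; only its increments are
   constrained, so [phi] need not be differentiable. *)
Hypothesis psi_le_incr : forall t h, a <= t < b -> 0 <= h -> t + h <= b ->
  psi t * h <= phi (t + h) - phi t.

(* The slack [eps * (s - a)] absorbs the first-order error of the derivative. *)
Let bounded_upto (eps s : R) := `|f s - f a| <= phi s - phi a + eps * (s - a).

Lemma bounded_upto_left_closed eps c : A <= a -> b <= B -> 0 <= eps ->
  a <= c <= b -> (forall s, a <= s < c -> bounded_upto eps s) ->
  bounded_upto eps c.
Proof.
move=> Aa bB eps_ge0 cab below_c; have [->|ac] := eqVneq c a.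
  by rewrite /bounded_upto !subrr normr0 mulr0 addr0.
have {}ac : a < c by rewrite lt_neqAle eq_sym ac; case/andP: cab.
apply/ler_addgt0Pr => eta eta_gt0.
have [d d_gt0 lip] := is_deriv_on_lipschitz_at (t := c) ltac:(lra).
set M := 1 + `|f' c|; have M_gt0 : 0 < M by rewrite /M; have := normr_ge0 (f' c); lra.
pose h := Num.min (d / 2) (Num.min (c - a) (eta / M)).
have h_gt0 : 0 < h by rewrite !lt_min divr_gt0 // subr_gt0 ac divr_gt0.
have hd : h < d by rewrite /h gt_min; apply/orP; left; lra.
have hca : h <= c - a by rewrite /h !ge_min lexx orbT.
have hMeta : M * h <= eta by rewrite mulrC -ler_pdivlMr // /h !ge_min lexx !orbT.
have := below_c (c - h) ltac:(lra); rewrite /bounded_upto.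
have := lip (- h) ltac:(lra); rewrite normrN gtr0_norm // -/M distrC => /(_ hd).
have phi_mono : 0 <= phi c - phi (c - h).
  have := psi_le_incr (t := c - h) ltac:(lra) (ltW h_gt0) ltac:(lra).
  have := le_trans (normr_ge0 _) (deriv_le_psi (t := c - h) ltac:(lra)).
  rewrite subrK; nra.
have := ler_normD (f c - f (c - h)) (f (c - h) - f a); rewrite addrA subrK.
have : eps * (c - h - a) <= eps * (c - a) by apply: ler_wpM2l; lra.
lra.
Qed.

Lemma bounded_upto_right_open eps c : A <= a -> b <= B -> 0 < eps ->
  a <= c < b -> bounded_upto eps c -> exists2 d, 0 < d &
    forall s, c < s <= b -> s < c + d -> bounded_upto eps s.
Proof.
move=> Aa bB eps_gt0 cab bounded_c.
have [d d_gt0 approx] := is_deriv_on_approx (t := c) ltac:(lra) eps_gt0.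
exists d => // s /andP[cs sb] sd.
have [h s_eq h_gt0] : exists2 h, s = c + h & 0 < h.
  by exists (s - c); [rewrite addrC subrK | lra].
rewrite {}s_eq in sb sd *; move: bounded_c; rewrite /bounded_upto.
have := approx h ltac:(lra) ltac:(rewrite gtr0_norm //; lra).
have := psi_le_incr (t := c) ltac:(lra) (ltW h_gt0) sb.
have := ler_wpM2l (ltW h_gt0) (deriv_le_psi (t := c) ltac:(lra)).
have -> : f (c + h) - f a = (f (c + h) - f c - h *: f' c) + (h *: f' c + (f c - f a)).
  by rewrite addrA subrK addrA subrK.
have := ler_normD (h *: f' c) (f c - f a).
have := ler_normD (f (c + h) - f c - h *: f' c) (h *: f' c + (f c - f a)).
rewrite normrZ gtr0_norm //; lra.
Qed.

Lemma mean_value_ineq : A <= a -> a <= b -> b <= B ->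
  `|f b - f a| <= phi b - phi a.
Proof.
move=> Aa ab bB; apply/ler_addgt0Pr => e e_gt0.
have ba1_gt0 : 0 < b - a + 1 by lra.
pose eps := e / (b - a + 1); have eps_gt0 : 0 < eps by rewrite divr_gt0.
have : bounded_upto eps b.
  apply: (@real_induction _ a b (bounded_upto eps)); last by lra.
  - by move=> c; apply: bounded_upto_left_closed Aa bB (ltW eps_gt0).
  - move=> c cab upto_c; apply: bounded_upto_right_open => //.
    by apply: upto_c; lra.
rewrite /bounded_upto.
have : eps * (b - a) <= e.
  by rewrite mulrAC ler_pdivrMr // ler_wpM2l ?ltW //; lra.
lra.
Qed.

End MeanValueInequality.

Lemma ler_subXX (R : numDomainType) (x y : R) (n : nat) : 0 <= y -> y <= x ->
  (x - y) * (y ^+ n *+ n.+1) <= x ^+ n.+1 - y ^+ n.+1.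
Proof.
move=> y_ge0 yx; rewrite subrXX ler_wpM2l ?subr_ge0 //=.
rewrite -[X in _ *+ X](card_ord n.+1) -sumr_const ler_sum // => i _.
rewrite -{1}(subnK (leq_ord i)) exprD ler_wpM2r ?exprn_ge0 //.
by rewrite lerXn2r ?nnegrE ?(le_trans y_ge0).
Qed.

Lemma leq_bin_exp2 (n k : nat) : ('C(n, k) <= 2 ^ n)%N.
Proof.
elim: n k => [|n IHn] [|k] //; first by rewrite bin0 expn_gt0.
by rewrite binS expnS mul2n -addnn leq_add.
Qed.

Lemma mul_bin_addS (m k : nat) :
  ('C(m + k.+1, k.+1) * k.+1 = m.+1 * 'C(m.+1 + k, k))%N.
Proof. by rewrite mulnC mul_bin_left addnS subSn ?leq_addl // addnK addSn. Qed.

Lemma exp2_bounded_eq0 (R : archiRealFieldType) (x M : R) : 0 <= x ->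
  (forall k : nat, 2 ^+ k * x <= M) -> x = 0.
Proof.
move=> x_ge0 bounded; apply/eqP; rewrite eq_le x_ge0 andbT leNgt.
apply/negP => x_gt0.
have M_ge0 : 0 <= M by have := bounded 0%N; rewrite expr0 mul1r; lra.
have := archi_boundP (divr_ge0 M_ge0 x_ge0); set k := Num.Def.archi_bound _.
rewrite ltr_pdivrMr // => Mx.
have : k%:R <= 2 ^+ k :> R by rewrite -natrX ler_nat ltnW // ltn_expl.
have := bounded k; nra.
Qed.

Section Hierarchy.
Variables (R : realType) (E : nat -> completeNormedModType R).
Variables (U : forall n, R -> {linear E n -> E n}).
Variables (L : forall n, {linear E n.+1 -> E n}).
Variables (C tstar r : R) (u u' : forall n, R -> E n).
Hypothesis C_gt0 : 0 < C.
Hypothesis U_iso : forall n, (0 < n)%N -> sc_isometry_group (U n).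
Hypothesis L_bound : forall n, (0 < n)%N -> forall x, `|L n x| <= C * n%:R * `|x|.
Hypothesis u_C1 : forall n, (0 < n)%N -> is_C1_on 0 tstar (u n) (u' n).
Hypothesis u_eq : forall n, (0 < n)%N -> forall t, 0 <= t <= tstar ->
  u' n t = U n t (L n (U n.+1 (- t) (u n.+1 t))).
Hypothesis u_0 : forall n, (0 < n)%N -> u n 0 = 0.
Hypothesis r_gt0 : 0 < r.
Hypothesis u_bound : forall n, (0 < n)%N -> forall t, 0 <= t <= tstar ->
  `|u n t| <= r ^+ n.

Lemma norm_deriv_le m t : 0 <= t <= tstar ->
  `|u' m.+1 t| <= C * m.+1%:R * `|u m.+2 t|.
Proof.
move=> t_in; rewrite u_eq //.
have [_ _ Um1_iso _] := U_iso (n := m.+1) isT.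
have [_ _ Um2_iso _] := U_iso (n := m.+2) isT.
by rewrite Um1_iso -(Um2_iso (- t) (u m.+2 t)) L_bound.
Qed.

Lemma u_iterated_bound s0 k m s : 0 <= s0 -> (forall n, u n.+1 s0 = 0) ->
  s0 <= s <= tstar ->
  `|u m.+1 s| <= C ^+ k * r ^+ (m.+1 + k) * 'C(m + k, k)%:R * (s - s0) ^+ k.
Proof.
move=> s0_ge0 u_s0; elim: k m s => [|k IHk] m s /andP[s0s stt].
  by rewrite !expr0 mul1r addn0 bin0 !mulr1 u_bound //; lra.
set K := C ^+ k.+1 * r ^+ (m.+1 + k.+1) * 'C(m + k.+1, k.+1)%:R.
have K_ge0 : 0 <= K by rewrite /K !mulr_ge0 ?exprn_ge0 // ltW.
have K_rec : K * k.+1%:R =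
    C * m.+1%:R * (C ^+ k * r ^+ (m.+2 + k) * 'C(m.+1 + k, k)%:R).
  rewrite /K -mulrA -natrM mul_bin_addS natrM exprS -addSnnS addSn; ring.
clearbody K.
have := mean_value_ineq (u_C1 (n := m.+1) isT).1
  (phi := fun x => K * (x - s0) ^+ k.+1)
  (psi := fun x => K * k.+1%:R * (x - s0) ^+ k)
  _ _ s0_ge0 s0s stt.
rewrite u_s0 subr0 subrr expr0n mulr0 subr0; apply.
- move=> x /andP[s0x xs]; apply: le_trans (norm_deriv_le _ _) _; first by lra.
  rewrite K_rec -[leRHS]mulrA ler_pM2l; last by rewrite mulr_gt0.
  by apply: IHk; lra.
- move=> x h /andP[s0x _] h_ge0 _; rewrite -mulrBr -!mulrA ler_wpM2l //.
  have := @ler_subXX _ (x + h - s0) (x - s0) k ltac:(lra) ltac:(lra).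
  rewrite (_ : x + h - s0 - (x - s0) = h); last by ring.
  by rewrite mulr_natl -mulrnAl mulrC.
Qed.

Lemma u_vanish_near s0 m t : 0 <= s0 -> (forall n, u n.+1 s0 = 0) ->
  s0 <= t <= tstar -> t - s0 <= (4 * C * r)^-1 -> u m.+1 t = 0.
Proof.
move=> s0_ge0 u_s0 t_in; set d := (4 * C * r)^-1 => t_near.
have Cr_gt0 : 0 < 4 * C * r by rewrite !mulr_gt0.
apply/normr0_eq0/(@exp2_bounded_eq0 _ _ (r ^+ m.+1 * 2 ^+ m)) => // k.
have bin_le : 'C(m + k, k)%:R <= 2 ^+ (m + k) :> R.
  by rewrite -natrX ler_nat leq_bin_exp2.
have dist_le : (t - s0) ^+ k <= d ^+ k.
  by rewrite lerXn2r // nnegrE; [lra | rewrite invr_ge0 ltW].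
have -> : r ^+ m.+1 * 2 ^+ m =
    2 ^+ k * (C ^+ k * r ^+ (m.+1 + k) * 2 ^+ (m + k) * d ^+ k).
  transitivity (r ^+ m.+1 * 2 ^+ m * (4 * C * r * d) ^+ k).
    by rewrite divff ?lt0r_neq0 // expr1n mulr1.
  by rewrite (_ : 4 = 2 * 2) ?exprMn ?exprD; ring.
apply: ler_wpM2l; first exact: exprn_ge0.
apply: le_trans (u_iterated_bound k m s0_ge0 u_s0 t_in) _.
have X_ge0 : 0 <= C ^+ k * r ^+ (m.+1 + k).
  by rewrite mulr_ge0 // exprn_ge0 // ltW.
apply: ler_pM => //; first by rewrite mulr_ge0.
- by rewrite exprn_ge0 //; lra.
- exact: ler_wpM2l.
Qed.

Lemma u_vanish_below j m t : 0 <= t <= tstar -> t <= j%:R * (4 * C * r)^-1 ->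
  u m.+1 t = 0.
Proof.
set d := (4 * C * r)^-1; have d_gt0 : 0 < d by rewrite invr_gt0 !mulr_gt0.
elim: j m t => [|j IHj] m t t_in.
  rewrite mul0r => t_le0; have -> : t = 0 by lra.
  exact: u_0.
move=> t_le; have [|t_gt] := leP t (j%:R * d); first exact: IHj.
have jd_ge0 : 0 <= j%:R * d by rewrite mulr_ge0 // ltW.
apply: (u_vanish_near (s0 := j%:R * d)) => //.
- by move=> n; apply: IHj; lra.
- by lra.
- by rewrite -/d; move: t_le; rewrite -natr1 mulrDl mul1r; lra.
Qed.

Lemma u_eq0 m t : 0 <= t <= tstar -> u m.+1 t = 0.
Proof.
set d := (4 * C * r)^-1; have d_gt0 : 0 < d by rewrite invr_gt0 !mulr_gt0.
move=> t_in; have tstar_ge0 : 0 <= tstar by lra.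
have := archi_boundP (divr_ge0 tstar_ge0 (ltW d_gt0)).
rewrite ltr_pdivrMr // => tstar_lt.
by apply: (u_vanish_below (j := Num.Def.archi_bound (tstar / d))); rewrite -/d; lra.
Qed.

End Hierarchy.

Theorem mainTheorem15 (R : realType)
  (E : nat -> completeNormedModType R)
  (U : forall n : nat, R -> {linear E n -> E n})
  (L : forall n : nat, {linear E n.+1 -> E n})
  (C : R) (tstar r : R)
  (u u' : forall n : nat, R -> E n) :
  0 < C ->
  (forall n, (0 < n)%N -> sc_isometry_group (U n)) ->
  (forall n, (0 < n)%N -> forall x : E n.+1, `|L n x| <= C * n%:R * `|x|) ->
  0 < tstar ->
  (forall n, (0 < n)%N -> is_C1_on 0 tstar (u n) (u' n)) ->
  (forall n, (0 < n)%N -> forall t, 0 <= t <= tstar ->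
     u' n t = U n t (L n (U n.+1 (- t) (u n.+1 t)))) ->
  (forall n, (0 < n)%N -> u n 0 = 0) ->
  0 < r ->
  (forall n, (0 < n)%N -> forall t, 0 <= t <= tstar -> `|u n t| <= r ^+ n) ->
  forall n, (0 < n)%N -> forall t, 0 <= t <= tstar -> u n t = 0.
Proof.
move=> C_gt0 U_iso L_bound _ u_C1 u_eq u_0 r_gt0 u_bound [|m] // _ t.
exact: (u_eq0 C_gt0 U_iso L_bound u_C1 u_eq u_0 r_gt0 u_bound).
Qed.
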